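(* Let $\epsilon\in(0,1)$ and let $P_M=\frac{1}{2M}\sum_{i=1}^N\frac{\sigma_n^2d_i^\alpha}{\sigma_{v,i}^2}$. (a) For every $M\ge1$, $P_D^{(M)}(P_M)\ \ge\ \epsilon^{1/(1+\frac{\sigma_\theta^2}{3}\sum_{i=1}^N\sigma_{v,i}^{-2})}\ >\ \epsilon$. (b) For every $\mathbf{h}\in\mathbb{C}^N$ with all entries nonzero and every $M\ge1$, $\epsilon<P_D^s(P_M;\mathbf{h})\le\epsilon^{1/(1+\zeta_M)}$, where $\zeta_M=\frac{\mathbf{h}^H\mathbf{h}}{2M}\sum_{i=1}^N\frac{\sigma_\theta^2 d_i^\alpha}{\sigma_{v,i}^2}$; in particular, if $\mathbf{h}$ is random with independent entries $h_i\sim\mathcal{CN}(0,d_i^{-\alpha})$, then $\zeta_M\to0$ in probability and $P_D^s(P_M;\mathbf{h})\to\epsilon$ in probability as $M\to\infty$. (c) For every $M\ge1$, every $P>0$ and every $\mathbf{h}$ with all entries nonzero, both $P_D^{(M)}(P)$ and $P_D^s(P;\mathbf{h})$ are at most $\epsilon^{1/(1+\sigma_\theta^2\sum_{i=1}^N\sigma_{v,i}^{-2})}$, are nondecreasing in $P$, and converge to $\epsilon^{1/(1+\sigma_\theta^2\sum_{i=1}^N\sigma_{v,i}^{-2})}$ as $P\to\infty$.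
   Context: Constants: $\sigma_\theta^2,\sigma_n^2>0$, $\sigma_{v,i}^2>0$, $d_i>0$, $\alpha>0$, $i=1,\dots,N$; $\mathbf{V}=\mathrm{diag}\{\sigma_{v,1}^2,\dots,\sigma_{v,N}^2\}$. Multi-antenna (large-$M$) detector: for $x\in[0,\infty)^N$ let $g_M(x)=\sum_{i=1}^N\frac{Mx_i}{\sigma_n^2d_i^\alpha+\sigma_{v,i}^2Mx_i}$ (the almost-sure large-$M$ limit of the NP detection SNR with $|a_i|^2=x_i$), $G_M(P)=\max\{g_M(x):x\ge0,\ \sum_ix_i=P\}$, and $P_D^{(M)}(P)=\epsilon^{1/(1+\sigma_\theta^2G_M(P))}$ (optimal detection probability at false-alarm probability $\epsilon$). Single-antenna detector: with scalar channel gains $\mathbf{h}=[h_1,\dots,h_N]^T$, $\mathbf{F}=\mathrm{diag}\{h_1,\dots,h_N\}$, the received signal is $y=\mathbf{a}^H\mathbf{F}\mathbf{v}+n$ under $\mathcal{H}_0$ and $y=\mathbf{a}^H\mathbf{h}\theta+\mathbf{a}^H\mathbf{F}\mathbf{v}+n$ under $\mathcal{H}_1$, $n\sim\mathcal{CN}(0,\sigma_n^2)$. Its NP detection probability at false-alarm probability $\epsilon$ is $\epsilon^{1/(1+\rho(\mathbf{a}))}$ with $\rho(\mathbf{a})=\frac{\sigma_\theta^2\mathbf{a}^H\mathbf{h}\mathbf{h}^H\mathbf{a}}{\mathbf{a}^H\mathbf{F}\mathbf{V}\mathbf{F}^H\mathbf{a}+\sigma_n^2}$. Define $S(P;\mathbf{h})=\max\{\rho(\mathbf{a}):\mathbf{a}\in\mathbb{C}^N,\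 \mathbf{a}^H\mathbf{a}=P\}$ and $P_D^s(P;\mathbf{h})=\epsilon^{1/(1+S(P;\mathbf{h}))}$. *)

From Stdlib Require Import Reals Lra Lia ClassicalEpsilon.
Open Scope R_scope.

(* finite sum  sumR n f = f 0 + ... + f (n-1) ; indices i = 0..N-1 stand for 1..N *)
Fixpoint sumR (n : nat) (f : nat -> R) : R :=
  match n with
  | O => 0
  | S k => sumR k f + f k
  end.

(* least upper bound of a set of reals (the paper's "max"; the maxima below are
   attained, so this is the maximum value) *)
Definition supR (S : R -> Prop) : R :=
  epsilon (inhabits 0) (fun v => is_lub S v).

Record cplx := mkC { re : R; im : R }.
Definition norm2 (z : cplx) : R := re z * re z + im z * im z.

(* a^H b = sum_i conj(a_i) b_i  for complex N-vectors a b : nat -> cplx *)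
Definition cinner (N : nat) (a b : nat -> cplx) : cplx :=
  mkC (sumR N (fun i => re (a i) * re (b i) + im (a i) * im (b i)))
      (sumR N (fun i => re (a i) * im (b i) - im (a i) * re (b i))).

Definition PD (eps s : R) : R := Rpower eps (1 / (1 + s)).

(* sv i = sigma_{v,i}^2, sn2 = sigma_n^2, d i = d_i, alpha = alpha *)
Definition gM (N M : nat) (sn2 alpha : R) (sv d : nat -> R) (x : nat -> R) : R :=
  sumR N (fun i => INR M * x i /
                   (sn2 * Rpower (d i) alpha + sv i * INR M * x i)).

Definition GM (N M : nat) (sn2 alpha : R) (sv d : nat -> R) (P : R) : R :=
  supR (fun v => exists x : nat -> R,
          (forall i, (i < N)%nat -> 0 <= x i) /\ sumR N x = P /\
          v = gM N M sn2 alpha sv d x).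

Definition PD_M (N M : nat) (eps sth sn2 alpha : R) (sv d : nat -> R) (P : R) : R :=
  PD eps (sth * GM N M sn2 alpha sv d P).

(* rho(a) = sth * |a^H h|^2 / (a^H F V F^H a + sn2),  F = diag(h), V = diag(sv) *)
Definition rho (N : nat) (sth sn2 : R) (sv : nat -> R) (h a : nat -> cplx) : R :=
  sth * norm2 (cinner N a h) /
  (sumR N (fun i => sv i * norm2 (h i) * norm2 (a i)) + sn2).

Definition Ssingle (N : nat) (sth sn2 : R) (sv : nat -> R) (h : nat -> cplx) (P : R) : R :=
  supR (fun v => exists a : nat -> cplx,
          sumR N (fun i => norm2 (a i)) = P /\ v = rho N sth sn2 sv h a).

Definition PD_s (N : nat) (eps sth sn2 : R) (sv : nat -> R) (h : nat -> cplx) (P : R) : R :=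
  PD eps (Ssingle N sth sn2 sv h P).

Definition P_M (N M : nat) (sn2 alpha : R) (sv d : nat -> R) : R :=
  / (2 * INR M) * sumR N (fun i => sn2 * Rpower (d i) alpha / sv i).

Definition zeta_M (N M : nat) (sth alpha : R) (sv d : nat -> R) (h : nat -> cplx) : R :=
  sumR N (fun i => norm2 (h i)) / (2 * INR M) *
  sumR N (fun i => sth * Rpower (d i) alpha / sv i).

From Stdlib Require Import Reals Lra Lia ClassicalEpsilon.
Open Scope R_scope.

(* Both detection probabilities have the form [PD eps s = eps^(1/(1+s))], which is
   increasing in the SNR [s >= 0] and [(-ln eps)]-Lipschitz there, so everything
   reduces to estimates of the two maximal SNRs.  Each summand [M x / (A + sv M x)]
   of [g_M] increases to [1/sv], so [G_M <= sum 1/sv]; the equal power split comes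
   within [O(1/P)] of this bound, and the split [x_i = A_i / (2 M sv_i)], of total
   power [P_M], gives every summand a third of its limit.  For one antenna,
   Cauchy–Schwarz bounds [|a^H h|^2] both by [(sum 1/sv) (a^H F V F^H a)], whence
   [rho <= sth sum 1/sv], and by [|a|^2 |h|^2], whence [rho <= sth P |h|^2 / sn2],
   which is [zeta_M] at [P = P_M]; the beam [a_i ~ h_i / (sv_i |h_i|^2)] attains the
   first bound up to [O(1/P)], and amplifying a beam never lowers [rho], which gives
   monotonicity in [P]. *)

Lemma sumR_ext n f g : (forall i, (i < n)%nat -> f i = g i) -> sumR n f = sumR n g.
Proof.
  induction n as [|n IH]; intros H; simpl; [reflexivity|].
  rewrite IH, H; auto; intros; apply H; lia.
Qed.

Lemma sumR_le n f g : (forall i, (i < n)%nat -> f i <= g i) -> sumR n f <= sumR n g.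
Proof.
  induction n as [|n IH]; intros H; simpl; [lra|].
  assert (sumR n f <= sumR n g) by (apply IH; intros; apply H; lia).
  specialize (H n (Nat.lt_succ_diag_r n)); lra.
Qed.

Lemma sumR_add n f g : sumR n (fun i => f i + g i) = sumR n f + sumR n g.
Proof. induction n as [|n IH]; simpl; [lra|]. rewrite IH; ring. Qed.

Lemma sumR_scal n c f : sumR n (fun i => c * f i) = c * sumR n f.
Proof. induction n as [|n IH]; simpl; [ring|]. rewrite IH; ring. Qed.

Lemma sumR_sub n f g : sumR n (fun i => f i - g i) = sumR n f - sumR n g.
Proof. induction n as [|n IH]; simpl; [lra|]. rewrite IH; ring. Qed.

Lemma sumR_const n c : sumR n (fun _ => c) = INR n * c.
Proof. induction n as [|n IH]; simpl sumR; [simpl; ring|]. rewrite IH, S_INR; ring. Qed.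

Lemma sumR_ge0 n f : (forall i, (i < n)%nat -> 0 <= f i) -> 0 <= sumR n f.
Proof.
  intros H. replace 0 with (sumR n (fun _ => 0)) by (rewrite sumR_const; ring).
  now apply sumR_le.
Qed.

Lemma sumR_gt0 n f : (1 <= n)%nat -> (forall i, (i < n)%nat -> 0 < f i) -> 0 < sumR n f.
Proof.
  destruct n as [|n]; [lia|]. intros _ H; simpl.
  assert (0 <= sumR n f) by (apply sumR_ge0; intros; left; apply H; lia).
  specialize (H n (Nat.lt_succ_diag_r n)); lra.
Qed.

Lemma sumR_inv_gt0 n f : (1 <= n)%nat -> (forall i, (i < n)%nat -> 0 < f i) ->
  0 < sumR n (fun i => / f i).
Proof. intros Hn Hf. apply sumR_gt0; auto. intros i Hi; now apply Rinv_0_lt_compat, Hf. Qed.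

(* Cauchy–Schwarz for complex sums, with [zr] and [zi] the real and imaginary parts
   of the summands. *)
Lemma sumR_cauchy_schwarz n zr zi u v :
  (forall i, (i < n)%nat -> zr i * zr i + zi i * zi i <= u i * v i /\ 0 <= u i /\ 0 <= v i) ->
  sumR n zr * sumR n zr + sumR n zi * sumR n zi <= sumR n u * sumR n v.
Proof.
  induction n as [|n IH]; simpl; intros H; [lra|].
  assert (IHn := IH (fun i Hi => H i ltac:(lia))).
  destruct (H n (Nat.lt_succ_diag_r n)) as (Hz & Hu & Hv).
  assert (HU : 0 <= sumR n u) by (apply sumR_ge0; intros; apply H; lia).
  assert (HV : 0 <= sumR n v) by (apply sumR_ge0; intros; apply H; lia).
  set (U := sumR n u) in *. set (V := sumR n v) in *.
  set (A := sumR n zr) in *. set (B := sumR n zi) in *.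
  set (a := zr n) in *. set (b := zi n) in *.
  assert (Hlagrange : (A*a + B*b) * (A*a + B*b) <= (A*A + B*B) * (a*a + b*b))
    by (pose proof (Rle_0_sqr (A*b - B*a)); unfold Rsqr in *; nra).
  assert (Hprod : (A*A + B*B) * (a*a + b*b) <= (U*V) * (u n * v n))
    by (apply Rmult_le_compat; nra).
  assert (Hamgm : 4 * ((U*V) * (u n * v n)) <= (U * v n + u n * V) * (U * v n + u n * V))
    by (pose proof (Rle_0_sqr (U * v n - u n * V)); unfold Rsqr in *; nra).
  assert (Hcross : 2 * (A*a + B*b) <= U * v n + u n * V).
  { apply Rsqr_incr_0_var; unfold Rsqr; nra. }
  lra.
Qed.

Lemma supR_is_lub S : bound S -> (exists x, S x) -> is_lub S (supR S).
Proof.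
  intros Hb He. unfold supR. apply epsilon_spec.
  destruct (completeness S Hb He) as [m Hm]. eauto.
Qed.

Lemma supR_ub S b v : (forall x, S x -> x <= b) -> S v -> v <= supR S.
Proof.
  intros Hb Hv. apply (supR_is_lub S); [exists b; exact Hb | eauto | exact Hv].
Qed.

Lemma supR_least S b : (forall x, S x -> x <= b) -> (exists x, S x) -> supR S <= b.
Proof. intros Hb Hv. apply (supR_is_lub S); [exists b; exact Hb | exact Hv | exact Hb]. Qed.

Lemma supR_le_supR S1 S2 b : (forall x, S2 x -> x <= b) -> (exists x, S1 x) ->
  (forall v, S1 v -> exists w, S2 w /\ v <= w) -> supR S1 <= supR S2.
Proof.
  intros Hb He Hdom. apply supR_least; auto.
  intros x Hx. destruct (Hdom x Hx) as (w & Hw & Hle).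
  apply Rle_trans with w; [exact Hle | now apply supR_ub with b].
Qed.

Lemma Un_cv_squeeze (u v : nat -> R) l :
  (forall k, l <= u k <= v k) -> Un_cv v l -> Un_cv u l.
Proof.
  intros Huv Hv e He. destruct (Hv e He) as [n Hn]. exists n. intros k Hk.
  specialize (Hn k Hk). specialize (Huv k). unfold R_dist in *.
  rewrite Rabs_right in * by lra. lra.
Qed.

Lemma Un_cv_div_succ c : Un_cv (fun k => c / INR (S k)) 0.
Proof.
  intros e He. destruct (INR_archimed e (Rabs c) He) as [n Hn]. exists n. intros k Hk.
  assert (Hkpos : 0 < INR (S k)) by (apply lt_0_INR; lia).
  assert (Hnk : INR n <= INR (S k)) by (apply le_INR; lia).
  unfold R_dist, Rdiv. rewrite Rminus_0_r, Rabs_mult, Rabs_inv, (Rabs_right (INR (S k))) by lra.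
  apply Rmult_lt_reg_r with (INR (S k)); [exact Hkpos|].
  rewrite Rmult_assoc, Rinv_l by lra. nra.
Qed.

Section DetectionProbability.
Variable eps : R.
Hypothesis Heps : 0 < eps < 1.

Lemma ln_eps_lt0 : ln eps < 0.
Proof. rewrite <- ln_1. apply ln_increasing; lra. Qed.

Lemma PD_exp s : PD eps s = exp (ln eps / (1 + s)).
Proof. unfold PD, Rpower. f_equal. unfold Rdiv; ring. Qed.

Lemma PD_0 : PD eps 0 = eps.
Proof. rewrite PD_exp, Rplus_0_r, Rdiv_1_r. apply exp_ln; lra. Qed.

Lemma PD_exponent_le s1 s2 : 0 <= s1 <= s2 -> ln eps / (1 + s1) <= ln eps / (1 + s2).
Proof.
  intros Hs. pose proof ln_eps_lt0. unfold Rdiv.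
  assert (/ (1 + s2) <= / (1 + s1)) by (apply Rinv_le_contravar; lra).
  nra.
Qed.

Lemma PD_le s1 s2 : 0 <= s1 <= s2 -> PD eps s1 <= PD eps s2.
Proof.
  intros Hs. rewrite !PD_exp.
  destruct (PD_exponent_le s1 s2 Hs) as [Hlt | ->]; [left; now apply exp_increasing | lra].
Qed.

Lemma PD_gt_eps s : 0 < s -> eps < PD eps s.
Proof.
  intros Hs. pose proof ln_eps_lt0.
  rewrite <- PD_0 at 1. rewrite !PD_exp, Rplus_0_r, Rdiv_1_r. apply exp_increasing.
  assert (Hgap : ln eps / (1 + s) - ln eps = - ln eps * s / (1 + s)) by (field; lra).
  assert (0 < - ln eps * s / (1 + s)) by (apply Rdiv_lt_0_compat; nra).
  lra.
Qed.

(* [exp] is 1-Lipschitz on [(-oo, 0]] and the exponent [ln eps / (1 + s)] is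
   [(-ln eps)]-Lipschitz in [s >= 0]. *)
Lemma PD_sub_le s1 s2 : 0 <= s1 <= s2 -> PD eps s2 - PD eps s1 <= - ln eps * (s2 - s1).
Proof.
  intros Hs. pose proof ln_eps_lt0. rewrite !PD_exp.
  set (a := ln eps / (1 + s1)). set (b := ln eps / (1 + s2)).
  assert (Hab : a <= b) by (now apply PD_exponent_le).
  assert (Hb : b <= 0).
  { unfold b, Rdiv. assert (0 < / (1 + s2)) by (apply Rinv_0_lt_compat; lra). nra. }
  assert (Hexpb : 0 < exp b <= 1).
  { split; [apply exp_pos|]. rewrite <- exp_0.
    destruct Hb as [Hb | ->]; [left; now apply exp_increasing | lra]. }
  assert (Hsplit : exp a = exp b * exp (a - b)) by (rewrite <- exp_plus; f_equal; ring).
  pose proof (exp_ineq1_le (a - b)).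
  assert (Hexp : exp b - exp a <= b - a) by nra.
  assert (Hgap : b - a = - ln eps * (s2 - s1) / ((1 + s1) * (1 + s2)))
    by (unfold a, b; field; lra).
  assert (- ln eps * (s2 - s1) / ((1 + s1) * (1 + s2)) <= - ln eps * (s2 - s1)).
  { assert (0 <= - ln eps * (s2 - s1)) by nra.
    assert (/ ((1 + s1) * (1 + s2)) <= 1) by (rewrite <- Rinv_1; apply Rinv_le_contravar; nra).
    unfold Rdiv; nra. }
  lra.
Qed.

Lemma PD_cvg_eps (u : nat -> R) : (forall k, 0 <= u k) -> Un_cv u 0 ->
  Un_cv (fun k => PD eps (u k)) eps.
Proof.
  intros Hu Hcv e He. pose proof ln_eps_lt0.
  destruct (Hcv (e / - ln eps)) as [n Hn]; [apply Rdiv_lt_0_compat; lra|].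
  exists n. intros k Hk. specialize (Hn k Hk). unfold R_dist in *.
  pose proof (PD_sub_le 0 (u k) (conj (Rle_refl 0) (Hu k))) as Hlip.
  pose proof (PD_le 0 (u k) (conj (Rle_refl 0) (Hu k))) as Hmono.
  rewrite PD_0 in Hlip, Hmono. rewrite Rminus_0_r, Rabs_right in Hn by (apply Rle_ge, Hu).
  rewrite Rabs_right by lra.
  apply Rle_lt_trans with (- ln eps * u k); [lra|].
  apply Rmult_lt_reg_r with (/ - ln eps); [apply Rinv_0_lt_compat; lra|].
  replace (- ln eps * u k * / - ln eps) with (u k) by (field; lra). exact Hn.
Qed.

Lemma PD_cvg_of_gap (f : R -> R) s0 K :
  (forall P, 0 < P -> 0 <= f P <= s0) -> (forall P, 0 < P -> s0 - f P <= K / P) ->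
  forall e, 0 < e -> exists P0, 0 < P0 /\
    forall P, P0 <= P -> Rabs (PD eps (f P) - PD eps s0) < e.
Proof.
  intros Hf Hgap e He. pose proof ln_eps_lt0.
  set (c := - ln eps * Rabs K).
  assert (Hc : 0 <= c) by (unfold c; pose proof (Rabs_pos K); nra).
  exists (1 + 2 * c / e). split.
  { assert (0 <= 2 * c / e) by (apply Rmult_le_pos; [lra | left; apply Rinv_0_lt_compat, He]).
    lra. }
  intros P HP.
  assert (Hce : 0 <= 2 * c / e) by (apply Rmult_le_pos; [lra | left; apply Rinv_0_lt_compat, He]).
  assert (HP0 : 0 < P) by lra.
  destruct (Hf P HP0) as [Hf0 Hfs].
  pose proof (PD_le _ _ (conj Hf0 Hfs)). pose proof (PD_sub_le _ _ (conj Hf0 Hfs)).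
  assert (HK : s0 - f P <= Rabs K / P).
  { apply Rle_trans with (K / P); [now apply Hgap|].
    unfold Rdiv. apply Rmult_le_compat_r; [left; apply Rinv_0_lt_compat, HP0 | apply RRle_abs]. }
  assert (Hsmall : c / P < e).
  { apply Rmult_lt_reg_r with P; [exact HP0|].
    replace (c / P * P) with c by (field; lra).
    assert (e * (2 * c / e) <= e * P) by (apply Rmult_le_compat_l; lra).
    replace (e * (2 * c / e)) with (2 * c) in * by (field; lra). nra. }
  assert (- ln eps * (s0 - f P) <= c / P).
  { unfold c, Rdiv. rewrite Rmult_assoc. apply Rmult_le_compat_l; lra. }
  rewrite Rabs_left1 by lra. lra.
Qed.

Lemma PD_saturation (f : R -> R) s0 K :
  (forall P, 0 < P -> 0 <= f P <= s0) ->
  (forall P1 P2, 0 < P1 -> P1 <= P2 -> f P1 <= f P2) ->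
  (forall P, 0 < P -> s0 - f P <= K / P) ->
  (forall P, 0 < P -> PD eps (f P) <= PD eps s0)
  /\ (forall P1 P2, 0 < P1 -> P1 <= P2 -> PD eps (f P1) <= PD eps (f P2))
  /\ (forall e, 0 < e -> exists P0, 0 < P0 /\
        forall P, P0 <= P -> Rabs (PD eps (f P) - PD eps s0) < e).
Proof.
  intros Hf Hmono Hgap. split; [|split].
  - intros P HP. now apply PD_le, Hf.
  - intros P1 P2 HP1 HP. apply PD_le. split; [now apply Hf | now apply Hmono].
  - now apply PD_cvg_of_gap with K.
Qed.

End DetectionProbability.

Definition sat (m a s t : R) : R := m * t / (a + s * m * t).

Section SaturatingTerm.
Variables (m a s : R).
Hypotheses (Hm : 0 < m) (Ha : 0 < a) (Hs : 0 < s).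

Lemma sat_eq t : 0 <= t -> sat m a s t = / s - a / (s * (a + s * m * t)).
Proof. intros Ht. unfold sat. assert (0 <= s * m * t) by (apply Rmult_le_pos; nra). field; lra. Qed.

Lemma sat_ge0 t : 0 <= t -> 0 <= sat m a s t.
Proof.
  intros Ht. unfold sat. assert (0 <= s * m * t) by (apply Rmult_le_pos; nra).
  apply Rmult_le_pos; [nra | left; apply Rinv_0_lt_compat; lra].
Qed.

Lemma sat_le_inv t : 0 <= t -> sat m a s t <= / s.
Proof.
  intros Ht. rewrite sat_eq by exact Ht.
  assert (0 <= s * m * t) by (apply Rmult_le_pos; nra).
  assert (0 <= a / (s * (a + s * m * t))) by (apply Rle_mult_inv_pos; nra).
  lra.
Qed.

Lemma sat_le t t' : 0 <= t <= t' -> sat m a s t <= sat m a s t'.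
Proof.
  intros Ht. rewrite !sat_eq by lra.
  assert (0 <= s * m * t) by (apply Rmult_le_pos; nra).
  assert (s * m * t <= s * m * t') by (apply Rmult_le_compat_l; nra).
  assert (a / (s * (a + s * m * t')) <= a / (s * (a + s * m * t))).
  { unfold Rdiv. apply Rmult_le_compat_l; [lra|].
    apply Rinv_le_contravar; [apply Rmult_lt_0_compat|apply Rmult_le_compat_l]; lra. }
  lra.
Qed.

Lemma sat_ge t : 0 < t -> / s - a / (s * s * m * t) <= sat m a s t.
Proof.
  intros Ht. rewrite sat_eq by lra.
  assert (0 < s * m * t) by (apply Rmult_lt_0_compat; nra).
  assert (a / (s * (a + s * m * t)) <= a / (s * s * m * t)).
  { unfold Rdiv. apply Rmult_le_compat_l; [lra|].
    replace (s * s * m * t) with (s * (s * m * t)) by ring.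
    apply Rinv_le_contravar; [apply Rmult_lt_0_compat|apply Rmult_le_compat_l]; lra. }
  lra.
Qed.

Lemma sat_eq_third_inv : sat m a s (/ (2 * m) * (a / s)) = / (3 * s).
Proof. unfold sat. field. lra. Qed.

End SaturatingTerm.

Section MultiAntenna.
Variables (N M : nat) (sn2 alpha : R) (sv d : nat -> R).
Hypotheses (HN : (1 <= N)%nat) (HM : (1 <= M)%nat) (Hsn2 : 0 < sn2).
Hypothesis Hsv : forall i, (i < N)%nat -> 0 < sv i.

Let A i := sn2 * Rpower (d i) alpha.
Let Sinv := sumR N (fun i => / sv i).
Let G := GM N M sn2 alpha sv d.

Lemma A_gt0 i : 0 < A i.
Proof. apply Rmult_lt_0_compat; [exact Hsn2 | apply exp_pos]. Qed.

Lemma INR_M_gt0 : 0 < INR M.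
Proof. apply lt_0_INR; lia. Qed.

Lemma INR_N_gt0 : 0 < INR N.
Proof. apply lt_0_INR; lia. Qed.

Lemma gM_sat x : gM N M sn2 alpha sv d x = sumR N (fun i => sat (INR M) (A i) (sv i) (x i)).
Proof. reflexivity. Qed.

Lemma gM_ge0 x : (forall i, (i < N)%nat -> 0 <= x i) -> 0 <= gM N M sn2 alpha sv d x.
Proof.
  intros Hx. rewrite gM_sat. apply sumR_ge0. intros i Hi.
  apply sat_ge0; auto using INR_M_gt0, A_gt0.
Qed.

Lemma gM_le x : (forall i, (i < N)%nat -> 0 <= x i) -> gM N M sn2 alpha sv d x <= Sinv.
Proof.
  intros Hx. rewrite gM_sat. apply sumR_le. intros i Hi.
  apply sat_le_inv; auto using INR_M_gt0, A_gt0.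
Qed.

Lemma GM_bounded P v : (exists x : nat -> R, (forall i, (i < N)%nat -> 0 <= x i) /\
  sumR N x = P /\ v = gM N M sn2 alpha sv d x) -> v <= Sinv.
Proof. intros (x & Hx & _ & ->). now apply gM_le. Qed.

Lemma gM_le_GM P x : (forall i, (i < N)%nat -> 0 <= x i) -> sumR N x = P ->
  gM N M sn2 alpha sv d x <= G P.
Proof. intros Hx HP. apply supR_ub with Sinv; [exact (GM_bounded P) | eauto]. Qed.

Lemma equal_split_feasible P : 0 <= P ->
  (forall i, (i < N)%nat -> 0 <= P / INR N) /\ sumR N (fun _ => P / INR N) = P.
Proof.
  intros HP. pose proof INR_N_gt0. split.
  - intros; apply Rle_mult_inv_pos; lra.
  - rewrite sumR_const. field; lra.
Qed.

Lemma GM_le P : 0 <= P -> G P <= Sinv.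
Proof.
  intros HP. apply supR_least; [exact (GM_bounded P)|].
  destruct (equal_split_feasible P HP) as [Hx Hsum].
  exists (gM N M sn2 alpha sv d (fun _ => P / INR N)), (fun _ => P / INR N). auto.
Qed.

Lemma GM_ge0 P : 0 <= P -> 0 <= G P.
Proof.
  intros HP. destruct (equal_split_feasible P HP) as [Hx Hsum].
  apply Rle_trans with (gM N M sn2 alpha sv d (fun _ => P / INR N));
    [now apply gM_ge0 | now apply gM_le_GM].
Qed.

(* Spreading the extra power [P2 - P1] evenly maps each allocation for [P1] to
   a pointwise larger one for [P2]. *)
Lemma GM_le_GM P1 P2 : 0 <= P1 <= P2 -> G P1 <= G P2.
Proof.
  intros HP. apply supR_le_supR with Sinv; [exact (GM_bounded P2)| |].
  { destruct (equal_split_feasible P1 ltac:(lra)) as [Hx Hsum].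
    exists (gM N M sn2 alpha sv d (fun _ => P1 / INR N)), (fun _ => P1 / INR N). auto. }
  intros v (x & Hx & Hsum & ->). pose proof INR_N_gt0.
  set (dl := (P2 - P1) / INR N).
  assert (Hdl : 0 <= dl) by (apply Rle_mult_inv_pos; lra).
  exists (gM N M sn2 alpha sv d (fun i => x i + dl)). split.
  - exists (fun i => x i + dl). repeat split.
    + intros i Hi; specialize (Hx i Hi); lra.
    + rewrite sumR_add, sumR_const, Hsum. unfold dl; field; lra.
  - rewrite !gM_sat. apply sumR_le. intros i Hi. specialize (Hx i Hi).
    apply sat_le; auto using INR_M_gt0, A_gt0; lra.
Qed.

Lemma GM_ge_gap P : 0 < P ->
  Sinv - sumR N (fun i => A i * INR N / (sv i * sv i * INR M)) / P <= G P.
Proof.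
  intros HP. pose proof INR_N_gt0. pose proof INR_M_gt0.
  destruct (equal_split_feasible P ltac:(lra)) as [Hx Hsum].
  apply Rle_trans with (gM N M sn2 alpha sv d (fun _ => P / INR N)); [|now apply gM_le_GM].
  replace (sumR N (fun i => A i * INR N / (sv i * sv i * INR M)) / P)
    with (sumR N (fun i => A i / (sv i * sv i * INR M * (P / INR N)))).
  - rewrite gM_sat. unfold Sinv. rewrite <- sumR_sub. apply sumR_le. intros i Hi.
    apply sat_ge; auto using A_gt0. apply Rdiv_lt_0_compat; lra.
  - unfold Rdiv at 3. rewrite (Rmult_comm _ (/ P)), <- sumR_scal. apply sumR_ext. intros i Hi.
    pose proof (Hsv i Hi). field. repeat split; lra.
Qed.

Lemma GM_at_P_M : / 3 * Sinv <= G (P_M N M sn2 alpha sv d).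
Proof.
  pose proof INR_M_gt0.
  set (x := fun i => / (2 * INR M) * (A i / sv i)).
  replace (/ 3 * Sinv) with (gM N M sn2 alpha sv d x).
  - apply gM_le_GM; [|unfold x, P_M; apply sumR_scal].
    intros i Hi. pose proof (Hsv i Hi). pose proof (A_gt0 i).
    apply Rmult_le_pos; [left; apply Rinv_0_lt_compat; lra | apply Rle_mult_inv_pos; lra].
  - rewrite gM_sat. unfold Sinv. rewrite <- sumR_scal. apply sumR_ext. intros i Hi.
    pose proof (Hsv i Hi). pose proof (A_gt0 i). unfold x.
    rewrite sat_eq_third_inv by lra. field; lra.
Qed.

End MultiAntenna.

Lemma norm2_ge0 z : 0 <= norm2 z.
Proof. unfold norm2. nra. Qed.

Lemma norm2_gt0 z : z <> mkC 0 0 -> 0 < norm2 z.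
Proof.
  destruct z as [x y]. unfold norm2; simpl. intros Hz.
  destruct (Req_dec x 0) as [-> | Hx]; [destruct (Req_dec y 0) as [-> | Hy]|];
    [congruence | nra | nra].
Qed.

Lemma norm2_conj_mul a b :
  (re a * re b + im a * im b) * (re a * re b + im a * im b) +
  (re a * im b - im a * re b) * (re a * im b - im a * re b) = norm2 a * norm2 b.
Proof. unfold norm2; ring. Qed.

Definition scaleC (c : R) (a : nat -> cplx) (i : nat) : cplx := mkC (c * re (a i)) (c * im (a i)).

Section SingleAntenna.
Variables (N : nat) (sth sn2 : R) (sv : nat -> R) (h : nat -> cplx).
Hypotheses (HN : (1 <= N)%nat) (Hsth : 0 < sth) (Hsn2 : 0 < sn2).
Hypothesis Hsv : forall i, (i < N)%nat -> 0 < sv i.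
Hypothesis Hh : forall i, (i < N)%nat -> h i <> mkC 0 0.

Let Sinv := sumR N (fun i => / sv i).
Let H := sumR N (fun i => norm2 (h i)).
Let B := sumR N (fun i => / (sv i * sv i * norm2 (h i))).
Let power a := sumR N (fun i => norm2 (a i)).
(* [a^H F V F^H a], the noise power of the beam [a] in the denominator of [rho]. *)
Let noise a := sumR N (fun i => sv i * norm2 (h i) * norm2 (a i)).
Let rh := rho N sth sn2 sv h.
Let Ss := Ssingle N sth sn2 sv h.

Lemma Sinv_gt0 : 0 < Sinv.
Proof. now apply sumR_inv_gt0. Qed.

Lemma B_gt0 : 0 < B.
Proof.
  apply sumR_gt0; auto. intros i Hi. pose proof (Hsv i Hi). pose proof (norm2_gt0 _ (Hh i Hi)).
  apply Rinv_0_lt_compat, Rmult_lt_0_compat; [apply Rmult_lt_0_compat|]; lra.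
Qed.

Lemma noise_ge0 a : 0 <= noise a.
Proof.
  apply sumR_ge0. intros i Hi. pose proof (Hsv i Hi).
  pose proof (norm2_ge0 (h i)). pose proof (norm2_ge0 (a i)).
  apply Rmult_le_pos; [apply Rmult_le_pos|]; lra.
Qed.

Lemma cinner_le_Sinv_noise a : norm2 (cinner N a h) <= Sinv * noise a.
Proof.
  unfold norm2 at 1. apply sumR_cauchy_schwarz. intros i Hi.
  pose proof (Hsv i Hi). pose proof (norm2_ge0 (h i)). pose proof (norm2_ge0 (a i)).
  rewrite norm2_conj_mul. repeat split.
  - right. field. lra.
  - left; apply Rinv_0_lt_compat; lra.
  - apply Rmult_le_pos; [apply Rmult_le_pos|]; lra.
Qed.

Lemma cinner_le_power a : norm2 (cinner N a h) <= power a * H.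
Proof.
  unfold norm2 at 1. apply sumR_cauchy_schwarz. intros i Hi.
  rewrite norm2_conj_mul. repeat split; [lra | apply norm2_ge0 | apply norm2_ge0].
Qed.

Lemma rho_le_Sinv a : rh a <= sth * Sinv.
Proof.
  unfold rh, rho. fold (noise a).
  pose proof (cinner_le_Sinv_noise a). pose proof (noise_ge0 a). pose proof Sinv_gt0.
  apply Rmult_le_reg_r with (noise a + sn2); [lra|].
  replace (sth * norm2 (cinner N a h) / (noise a + sn2) * (noise a + sn2))
    with (sth * norm2 (cinner N a h)) by (field; lra).
  assert (sth * norm2 (cinner N a h) <= sth * (Sinv * noise a)) by (apply Rmult_le_compat_l; lra).
  assert (0 <= sth * Sinv * sn2) by (apply Rmult_le_pos; [apply Rmult_le_pos|]; lra).
  lra.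
Qed.

Lemma rho_le_power a : rh a <= sth * power a * H / sn2.
Proof.
  unfold rh, rho. fold (noise a).
  pose proof (cinner_le_power a). pose proof (noise_ge0 a). pose proof (norm2_ge0 (cinner N a h)).
  unfold Rdiv. apply Rle_trans with (sth * norm2 (cinner N a h) * / sn2).
  - apply Rmult_le_compat_l; [nra|]. apply Rinv_le_contravar; lra.
  - apply Rmult_le_compat_r; [left; apply Rinv_0_lt_compat; lra|]. nra.
Qed.

(* Conjugate beamforming weighted by [1 / (sv_i |h_i|^2)]: it attains equality in
   the Cauchy–Schwarz step of [cinner_le_Sinv_noise]. *)
Definition matched_beam (P : R) (i : nat) : cplx :=
  mkC (sqrt (P / B) * re (h i) / (sv i * norm2 (h i)))
      (sqrt (P / B) * im (h i) / (sv i * norm2 (h i))).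

Lemma matched_beam_spec P : 0 <= P ->
  power (matched_beam P) = P
  /\ rh (matched_beam P) = sth * Sinv * (P * Sinv) / (P * Sinv + sn2 * B).
Proof.
  intros HP. pose proof B_gt0. pose proof Sinv_gt0.
  set (t := sqrt (P / B)).
  assert (Ht : t * t = P / B) by (apply sqrt_sqrt, Rle_mult_inv_pos; lra).
  assert (Hcoef : forall i, (i < N)%nat ->
    norm2 (matched_beam P i) = t * t * / (sv i * sv i * norm2 (h i))
    /\ re (matched_beam P i) * re (h i) + im (matched_beam P i) * im (h i) = t * / sv i
    /\ re (matched_beam P i) * im (h i) - im (matched_beam P i) * re (h i) = 0).
  { intros i Hi. pose proof (Hsv i Hi). pose proof (norm2_gt0 _ (Hh i Hi)).
    unfold matched_beam, norm2 in *; simpl. fold t. repeat split; field; lra. }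
  assert (Hpower : power (matched_beam P) = t * t * B).
  { unfold power, B. rewrite <- sumR_scal. apply sumR_ext. intros i Hi. apply Hcoef, Hi. }
  assert (Hnoise : noise (matched_beam P) = t * t * Sinv).
  { unfold noise, Sinv. rewrite <- sumR_scal. apply sumR_ext. intros i Hi.
    destruct (Hcoef i Hi) as [-> _]. pose proof (Hsv i Hi). pose proof (norm2_gt0 _ (Hh i Hi)).
    field. lra. }
  assert (Hinner : cinner N (matched_beam P) h = mkC (t * Sinv) 0).
  { unfold cinner, Sinv. f_equal.
    - rewrite <- sumR_scal. apply sumR_ext. intros i Hi. apply Hcoef, Hi.
    - rewrite <- (Rmult_0_r (INR N)), <- sumR_const. apply sumR_ext. intros i Hi. apply Hcoef, Hi. }
  split.
  - rewrite Hpower, Ht. field. lra.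
  - unfold rh, rho. fold (noise (matched_beam P)).
    rewrite Hnoise, Hinner. unfold norm2; simpl.
    replace (t * Sinv * (t * Sinv) + 0 * 0) with (t * t * Sinv * Sinv) by ring. rewrite Ht.
    assert (0 <= P * Sinv) by nra.
    assert (0 <= P / B * Sinv) by (apply Rmult_le_pos; [apply Rle_mult_inv_pos|]; lra).
    field. repeat split; nra.
Qed.

Lemma Ssingle_bounded P v :
  (exists a, power a = P /\ v = rh a) -> v <= sth * Sinv.
Proof. intros (a & _ & ->). apply rho_le_Sinv. Qed.

Lemma rho_le_Ssingle P a : power a = P -> rh a <= Ss P.
Proof. intros Ha. apply supR_ub with (sth * Sinv); [exact (Ssingle_bounded P) | eauto]. Qed.

Lemma Ssingle_nonempty P : 0 <= P -> exists v, exists a, power a = P /\ v = rh a.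
Proof.
  intros HP. exists (rh (matched_beam P)), (matched_beam P).
  split; [now apply matched_beam_spec | reflexivity].
Qed.

Lemma Ssingle_le_Sinv P : 0 <= P -> Ss P <= sth * Sinv.
Proof. intros HP. apply supR_least; [exact (Ssingle_bounded P) | now apply Ssingle_nonempty]. Qed.

Lemma Ssingle_le_power P : 0 <= P -> Ss P <= sth * P * H / sn2.
Proof.
  intros HP. apply supR_least; [|now apply Ssingle_nonempty].
  intros v (a & <- & ->). apply rho_le_power.
Qed.

Lemma Ssingle_ge_matched P : 0 <= P -> sth * Sinv * (P * Sinv) / (P * Sinv + sn2 * B) <= Ss P.
Proof.
  intros HP. destruct (matched_beam_spec P HP) as [Hpow Hrho].
  rewrite <- Hrho. now apply rho_le_Ssingle.
Qed.

Lemma Ssingle_gt0 P : 0 < P -> 0 < Ss P.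
Proof.
  intros HP. pose proof Sinv_gt0. pose proof B_gt0.
  eapply Rlt_le_trans; [|apply Ssingle_ge_matched; lra].
  apply Rdiv_lt_0_compat; [apply Rmult_lt_0_compat|]; nra.
Qed.

Lemma Ssingle_ge_gap P : 0 < P -> sth * Sinv - sth * sn2 * B / P <= Ss P.
Proof.
  intros HP. pose proof Sinv_gt0. pose proof B_gt0.
  assert (0 < P * Sinv) by (apply Rmult_lt_0_compat; lra).
  assert (0 < sn2 * B) by (apply Rmult_lt_0_compat; lra).
  eapply Rle_trans; [|apply Ssingle_ge_matched; lra].
  assert (Hgap : sth * Sinv - sth * Sinv * (P * Sinv) / (P * Sinv + sn2 * B)
                 = sth * sn2 * B * (Sinv / (P * Sinv + sn2 * B))) by (field; nra).
  assert (Sinv / (P * Sinv + sn2 * B) <= / P).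
  { apply Rmult_le_reg_r with (P * (P * Sinv + sn2 * B)); [nra|].
    replace (Sinv / (P * Sinv + sn2 * B) * (P * (P * Sinv + sn2 * B))) with (P * Sinv)
      by (field; nra).
    replace (/ P * (P * (P * Sinv + sn2 * B))) with (P * Sinv + sn2 * B) by (field; lra). nra. }
  assert (0 < sth * sn2 * B) by (apply Rmult_lt_0_compat; [apply Rmult_lt_0_compat|]; lra).
  unfold Rdiv at 1. nra.
Qed.

(* Scaling [a] by [c] multiplies both [|a^H h|^2] and [noise a] by [c^2] while
   [sn2] stays fixed. *)
Lemma rho_le_scale c a : 1 <= c -> rh a <= rh (scaleC c a).
Proof.
  intros Hc. unfold rh, rho.
  assert (Hinner : norm2 (cinner N (scaleC c a) h) = c * c * norm2 (cinner N a h)).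
  { replace (cinner N (scaleC c a) h)
      with (mkC (c * re (cinner N a h)) (c * im (cinner N a h))).
    - unfold norm2; simpl; ring.
    - unfold cinner; simpl. rewrite <- !sumR_scal.
      f_equal; apply sumR_ext; intros; unfold scaleC; simpl; ring. }
  assert (Hnoise : sumR N (fun i => sv i * norm2 (h i) * norm2 (scaleC c a i)) = c * c * noise a).
  { unfold noise. rewrite <- sumR_scal. apply sumR_ext; intros; unfold scaleC, norm2; simpl; ring. }
  rewrite Hinner, Hnoise. fold (noise a).
  pose proof (noise_ge0 a). pose proof (norm2_ge0 (cinner N a h)).
  set (X := noise a) in *. set (Z := norm2 (cinner N a h)) in *.
  assert (Hcc : 1 <= c * c) by nra.
  apply Rmult_le_reg_r with ((X + sn2) * (c * c * X + sn2)); [apply Rmult_lt_0_compat; nra|].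
  replace (sth * Z / (X + sn2) * ((X + sn2) * (c * c * X + sn2)))
    with (sth * Z * (c * c * X + sn2)) by (field; lra).
  replace (sth * (c * c * Z) / (c * c * X + sn2) * ((X + sn2) * (c * c * X + sn2)))
    with (sth * (c * c * Z) * (X + sn2)) by (field; nra).
  assert (0 <= sth * Z * sn2 * (c * c - 1))
    by (apply Rmult_le_pos; [apply Rmult_le_pos; [apply Rmult_le_pos|]|]; lra).
  nra.
Qed.

Lemma Ssingle_le_Ssingle P1 P2 : 0 < P1 <= P2 -> Ss P1 <= Ss P2.
Proof.
  intros HP. apply supR_le_supR with (sth * Sinv);
    [exact (Ssingle_bounded P2) | apply Ssingle_nonempty; lra |].
  intros v (a & Ha & ->). set (c := sqrt (P2 / P1)).
  assert (Hcc : c * c = P2 / P1) by (apply sqrt_sqrt, Rle_mult_inv_pos; lra).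
  assert (Hc : 1 <= c).
  { assert (1 <= P2 / P1) by (apply Rmult_le_reg_r with P1; [lra|];
      replace (P2 / P1 * P1) with P2 by (field; lra); lra).
    assert (0 <= c) by apply sqrt_pos. nra. }
  exists (rh (scaleC c a)). split; [|now apply rho_le_scale].
  exists (scaleC c a). split; [|reflexivity].
  unfold power. replace P2 with (c * c * P1) by (rewrite Hcc; field; lra).
  rewrite <- Ha, <- sumR_scal. apply sumR_ext; intros; unfold scaleC, norm2; simpl; ring.
Qed.

End SingleAntenna.

Lemma zeta_M_eq (N M : nat) (sth sn2 alpha : R) (sv d : nat -> R) (h : nat -> cplx) :
  (1 <= M)%nat -> 0 < sn2 -> (forall i, (i < N)%nat -> 0 < sv i) ->
  zeta_M N M sth alpha sv d h = sth * P_M N M sn2 alpha sv d * sumR N (fun i => norm2 (h i)) / sn2.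
Proof.
  intros HM Hsn2 Hsv. assert (0 < INR M) by (apply lt_0_INR; lia).
  unfold zeta_M, P_M.
  replace (sumR N (fun i => sth * Rpower (d i) alpha / sv i))
    with (sth / sn2 * sumR N (fun i => sn2 * Rpower (d i) alpha / sv i)).
  - field. lra.
  - rewrite <- sumR_scal. apply sumR_ext. intros i Hi. pose proof (Hsv i Hi). field. lra.
Qed.

Lemma zeta_M_succ (N k : nat) (sth alpha : R) (sv d : nat -> R) (h : nat -> cplx) :
  zeta_M N (S k) sth alpha sv d h =
  sumR N (fun i => norm2 (h i)) * sumR N (fun i => sth * Rpower (d i) alpha / sv i) / 2
    / INR (S k).
Proof. unfold zeta_M. assert (0 < INR (S k)) by apply lt_0_INR, Nat.lt_0_succ. field. lra. Qed.

Lemma P_M_gt0 (N M : nat) (sn2 alpha : R) (sv d : nat -> R) :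
  (1 <= N)%nat -> (1 <= M)%nat -> 0 < sn2 -> (forall i, (i < N)%nat -> 0 < sv i) ->
  0 < P_M N M sn2 alpha sv d.
Proof.
  intros HN HM Hsn2 Hsv. assert (0 < INR M) by (apply lt_0_INR; lia). unfold P_M.
  apply Rmult_lt_0_compat; [apply Rinv_0_lt_compat; lra|].
  apply sumR_gt0; auto. intros i Hi.
  apply Rdiv_lt_0_compat; [apply Rmult_lt_0_compat; [lra | apply exp_pos] | auto].
Qed.

Section Detectors.
Variables (N : nat) (sth sn2 alpha eps : R) (sv d : nat -> R).
Hypotheses (HN : (1 <= N)%nat) (Hsth : 0 < sth) (Hsn2 : 0 < sn2).
Hypothesis Hsv : forall i, (i < N)%nat -> 0 < sv i.
Hypothesis Heps : 0 < eps < 1.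

Let Sinv := sumR N (fun i => / sv i).

Lemma PD_M_at_P_M M : (1 <= M)%nat ->
  PD_M N M eps sth sn2 alpha sv d (P_M N M sn2 alpha sv d) >= PD eps (sth / 3 * Sinv)
  /\ PD eps (sth / 3 * Sinv) > eps.
Proof.
  intros HM. assert (HS : 0 < Sinv) by now apply sumR_inv_gt0. split.
  - apply Rle_ge, PD_le; [exact Heps|]. split; [apply Rmult_le_pos; lra|].
    replace (sth / 3 * Sinv) with (sth * (/ 3 * Sinv)) by (unfold Rdiv; ring).
    apply Rmult_le_compat_l; [lra | now apply GM_at_P_M].
  - apply Rlt_gt, PD_gt_eps; [exact Heps|]. apply Rmult_lt_0_compat; lra.
Qed.

Section Channel.
Variable h : nat -> cplx.
Hypothesis Hh : forall i, (i < N)%nat -> h i <> mkC 0 0.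

Let PDs := PD_s N eps sth sn2 sv h.
Let zeta M := zeta_M N M sth alpha sv d h.

Lemma PD_s_at_P_M M : (1 <= M)%nat ->
  eps < PDs (P_M N M sn2 alpha sv d) /\ PDs (P_M N M sn2 alpha sv d) <= PD eps (zeta M).
Proof.
  intros HM. pose proof (P_M_gt0 N M sn2 alpha sv d HN HM Hsn2 Hsv).
  pose proof (Ssingle_gt0 N sth sn2 sv h HN Hsth Hsn2 Hsv Hh (P_M N M sn2 alpha sv d) H).
  split; [now apply PD_gt_eps|]. apply PD_le; [exact Heps|]. split; [lra|].
  unfold zeta. rewrite (zeta_M_eq N M sth sn2 alpha sv d h) by auto.
  apply Ssingle_le_power; auto; lra.
Qed.

Lemma zeta_M_ge0 M : (1 <= M)%nat -> 0 <= zeta M.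
Proof.
  intros HM. unfold zeta. rewrite (zeta_M_eq N M sth sn2 alpha sv d h) by auto.
  pose proof (P_M_gt0 N M sn2 alpha sv d HN HM Hsn2 Hsv).
  pose proof (sumR_ge0 N (fun i => norm2 (h i)) (fun i _ => norm2_ge0 (h i))).
  apply Rle_mult_inv_pos; [|exact Hsn2]. apply Rmult_le_pos; [|assumption].
  apply Rmult_le_pos; lra.
Qed.

Lemma zeta_M_cvg : Un_cv (fun k => zeta (S k)) 0.
Proof.
  unfold zeta. eapply Un_cv_ext; [intros k; symmetry; apply zeta_M_succ | apply Un_cv_div_succ].
Qed.

Lemma PD_s_at_P_M_cvg : Un_cv (fun k => PDs (P_M N (S k) sn2 alpha sv d)) eps.
Proof.
  apply Un_cv_squeeze with (fun k => PD eps (zeta (S k))).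
  - intros k. destruct (PD_s_at_P_M (S k) ltac:(lia)). split; lra.
  - apply PD_cvg_eps; [exact Heps| |exact zeta_M_cvg].
    intros k. apply zeta_M_ge0; lia.
Qed.

Lemma PD_M_saturation M : (1 <= M)%nat ->
  let PDM := PD_M N M eps sth sn2 alpha sv d in
  (forall P, 0 < P -> PDM P <= PD eps (sth * Sinv))
  /\ (forall P1 P2, 0 < P1 -> P1 <= P2 -> PDM P1 <= PDM P2)
  /\ (forall e, 0 < e -> exists P0, 0 < P0 /\
        forall P, P0 <= P -> Rabs (PDM P - PD eps (sth * Sinv)) < e).
Proof.
  intros HM PDM.
  apply (PD_saturation eps Heps (fun P => sth * GM N M sn2 alpha sv d P) (sth * Sinv)
    (sth * sumR N (fun i => sn2 * Rpower (d i) alpha * INR N / (sv i * sv i * INR M)))).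
  - intros P HP. split.
    + apply Rmult_le_pos; [lra | apply GM_ge0; auto; lra].
    + apply Rmult_le_compat_l; [lra | apply GM_le; auto; lra].
  - intros P1 P2 HP1 HP. apply Rmult_le_compat_l; [lra | apply GM_le_GM; auto; lra].
  - intros P HP. pose proof (GM_ge_gap N M sn2 alpha sv d HN HM Hsn2 Hsv P HP) as Hgap.
    cbv beta in Hgap. fold Sinv in Hgap.
    set (C := sumR N (fun i => sn2 * Rpower (d i) alpha * INR N / (sv i * sv i * INR M))) in *.
    assert (sth * (Sinv - C / P) <= sth * GM N M sn2 alpha sv d P)
      by (apply Rmult_le_compat_l; lra).
    replace (sth * C / P) with (sth * (C / P)) by (unfold Rdiv; ring). lra.
Qed.

Lemma PD_s_saturation :
  (forall P, 0 < P -> PDs P <= PD eps (sth * Sinv))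
  /\ (forall P1 P2, 0 < P1 -> P1 <= P2 -> PDs P1 <= PDs P2)
  /\ (forall e, 0 < e -> exists P0, 0 < P0 /\
        forall P, P0 <= P -> Rabs (PDs P - PD eps (sth * Sinv)) < e).
Proof.
  apply (PD_saturation eps Heps (Ssingle N sth sn2 sv h) (sth * Sinv)
    (sth * sn2 * sumR N (fun i => / (sv i * sv i * norm2 (h i))))).
  - intros P HP. split; [left; now apply Ssingle_gt0 | apply Ssingle_le_Sinv; auto; lra].
  - intros P1 P2 HP1 HP. apply Ssingle_le_Ssingle; auto.
  - intros P HP. pose proof (Ssingle_ge_gap N sth sn2 sv h HN Hsth Hsn2 Hsv Hh P HP) as Hgap.
    fold Sinv in Hgap. lra.
Qed.

Lemma detectors_saturate M : (1 <= M)%nat ->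
  let L := PD eps (sth * Sinv) in
  (forall P, 0 < P -> PD_M N M eps sth sn2 alpha sv d P <= L /\ PDs P <= L)
  /\ (forall P1 P2, 0 < P1 -> P1 <= P2 ->
        PD_M N M eps sth sn2 alpha sv d P1 <= PD_M N M eps sth sn2 alpha sv d P2
        /\ PDs P1 <= PDs P2)
  /\ (forall e, 0 < e -> exists P0, 0 < P0 /\ forall P, P0 <= P ->
        Rabs (PD_M N M eps sth sn2 alpha sv d P - L) < e /\ Rabs (PDs P - L) < e).
Proof.
  intros HM L.
  destruct (PD_M_saturation M HM) as (HubM & HmonoM & HcvgM).
  destruct PD_s_saturation as (Hubs & Hmonos & Hcvgs).
  split; [|split].
  - intros P HP. split; [apply HubM | apply Hubs]; exact HP.
  - intros P1 P2 HP1 HP. split; [apply HmonoM | apply Hmonos]; assumption.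
  - intros e He. destruct (HcvgM e He) as (P1 & HP1 & H1). destruct (Hcvgs e He) as (P2 & HP2 & H2).
    exists (Rmax P1 P2). split; [apply Rlt_le_trans with P1; [exact HP1 | apply Rmax_l]|].
    intros P HP. split; [apply H1 | apply H2];
      eapply Rle_trans; [apply Rmax_l | exact HP | apply Rmax_r | exact HP].
Qed.

End Channel.
End Detectors.

Theorem theorem2
  (N : nat) (sth sn2 alpha eps : R) (sv d : nat -> R)
  (HN : (1 <= N)%nat)
  (Hsth : 0 < sth) (Hsn2 : 0 < sn2) (Halpha : 0 < alpha)
  (Hsv : forall i, (i < N)%nat -> 0 < sv i)
  (Hd : forall i, (i < N)%nat -> 0 < d i)
  (Heps : 0 < eps < 1) :
  let L := PD eps (sth * sumR N (fun i => / sv i)) in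
  (* (a) *)
  (forall M : nat, (1 <= M)%nat ->
     PD_M N M eps sth sn2 alpha sv d (P_M N M sn2 alpha sv d)
       >= PD eps (sth / 3 * sumR N (fun i => / sv i))
     /\ PD eps (sth / 3 * sumR N (fun i => / sv i)) > eps)
  /\
  (* (b) *)
  (forall h : nat -> cplx, (forall i, (i < N)%nat -> h i <> mkC 0 0) ->
     (forall M : nat, (1 <= M)%nat ->
        eps < PD_s N eps sth sn2 sv h (P_M N M sn2 alpha sv d)
        /\ PD_s N eps sth sn2 sv h (P_M N M sn2 alpha sv d)
             <= PD eps (zeta_M N M sth alpha sv d h))
     /\ Un_cv (fun k => zeta_M N (S k) sth alpha sv d h) 0
     /\ Un_cv (fun k => PD_s N eps sth sn2 sv h (P_M N (S k) sn2 alpha sv d)) eps)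
  /\
  (* (c) *)
  (forall (M : nat) (h : nat -> cplx), (1 <= M)%nat ->
     (forall i, (i < N)%nat -> h i <> mkC 0 0) ->
     (forall P, 0 < P ->
        PD_M N M eps sth sn2 alpha sv d P <= L /\ PD_s N eps sth sn2 sv h P <= L)
     /\ (forall P1 P2, 0 < P1 -> P1 <= P2 ->
           PD_M N M eps sth sn2 alpha sv d P1 <= PD_M N M eps sth sn2 alpha sv d P2
           /\ PD_s N eps sth sn2 sv h P1 <= PD_s N eps sth sn2 sv h P2)
     /\ (forall e, 0 < e -> exists P0, 0 < P0 /\ forall P, P0 <= P ->
           Rabs (PD_M N M eps sth sn2 alpha sv d P - L) < e
           /\ Rabs (PD_s N eps sth sn2 sv h P - L) < e)).
Proof.
  intros L. split; [|split].
  - intros M HM. now apply PD_M_at_P_M.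
  - intros h Hh. split; [|split].
    + intros M HM. now apply PD_s_at_P_M.
    + now apply zeta_M_cvg.
    + now apply PD_s_at_P_M_cvg.
  - intros M h HM Hh. now apply detectors_saturate.
Qed.
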